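(* Consider COMPLEMENT-GRUNDY. Then $\mathcal{SG}(n)/n\rightarrow 0$, as $n\rightarrow \infty$.
   Context: COMPLEMENT-GRUNDY is the impartial normal-play heap game where a move replaces a heap $n$ by the disjunctive sum of $k$ heaps of size $d$ and one heap of size $r$ (omitted if $r=0$), where $n=kd+r$, $1\le d<n$, $0\le r<d$, and $k\ge 2$; a heap of size $1$ is terminal. $\mathcal{SG}$ denotes the Sprague-Grundy value (mex rule, nim-sum for disjunctive sums). *)

From Stdlib Require Import PeanoNat.
From mathcomp Require Import all_boot all_order all_algebra.

Set Implicit Arguments.
Unset Strict Implicit.
Unset Printing Implicit Defensive.

Definition nimsum (a b : nat) : nat := Nat.lxor a b.

Definition mex (s : seq nat) : nat :=
  find (fun m => m \notin s) (iota 0 (size s).+1).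

Definition nimsum_copies (k g : nat) : nat := iter k (nimsum g) 0.

(* Grundy value of the option of heap n obtained with divisor d:
   n = k*d + r, k = n %/ d, r = n %% d; the position is the disjunctive sum
   of k heaps of size d and one heap of size r (omitted if r = 0). *)
Definition option_value (sg : nat -> nat) (n d : nat) : nat :=
  let k := n %/ d in let r := n %% d in
  if r == 0 then nimsum_copies k (sg d)
  else nimsum (nimsum_copies k (sg d)) (sg r).

Definition moves (n : nat) : seq nat :=
  [seq d <- iota 1 n | (d < n) && (2 <= n %/ d)].

(* Fuel-based recursion; fuel n suffices for heap n (all d, r in an option
   are < n). *)
Fixpoint sg_fuel (fuel n : nat) : nat :=
  match fuel with
  | 0 => 0
  | f.+1 => mex [seq option_value (sg_fuel f) n d | d <- moves n]
  end.

Definition SG (n : nat) : nat := sg_fuel n n.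

From Stdlib Require Import PeanoNat.
From mathcomp Require Import all_boot all_order all_algebra.
From mathcomp Require Import all_classical all_reals all_analysis.
From mathcomp Require Import zify.

(* If n < 3^(j+1), every option of heap n is a nim-sum of Grundy values of
   heaps smaller than 3^j: the remainder r satisfies 3r < n, and the k copies
   of heap d cancel out when k is even, while an odd k >= 3 forces 3d <= n.
   Nim-sums of numbers below 2^j stay below 2^j, so induction on j gives
   SG(n) < 2^j whenever n < 3^j.  Hence SG(n) = O(n^(log_3 2)) = o(n). *)

Local Open Scope nat_scope.

Lemma expn_NatE m n : m ^ n = Nat.pow m n.
Proof. by elim: n => // n IHn; rewrite expnS IHn. Qed.

Lemma nimsum_lt_pow2 a b j : a < 2 ^ j -> b < 2 ^ j -> nimsum a b < 2 ^ j.
Proof.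
rewrite expn_NatE => /ltP ha /ltP hb; apply/ltP.
have pow_neq0 : Nat.pow 2 j <> 0 by apply: Nat.pow_nonzero.
have := Nat.shiftr_lxor a b j; rewrite !Nat.shiftr_div_pow2.
rewrite (proj2 (Nat.div_small_iff _ _ pow_neq0) ha).
rewrite (proj2 (Nat.div_small_iff _ _ pow_neq0) hb) Nat.lxor_0_l.
exact: (proj1 (Nat.div_small_iff _ _ pow_neq0)).
Qed.

Lemma nimsum_copiesE k g : nimsum_copies k g = if odd k then g else 0.
Proof.
elim: k => // k IHk; rewrite /nimsum_copies /= -/(nimsum_copies k g) IHk /nimsum.
by case: (odd k); rewrite ?Nat.lxor_nilpotent ?Nat.lxor_0_r.
Qed.

Lemma mex_le (s : seq nat) B : (forall x, x \in s -> x < B) -> mex s <= B.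
Proof.
move=> s_lt; rewrite /mex; set p := fun m => m \notin s.
case: leqP => // B_lt_find.
have B_lt_size : B < (size s).+1.
  by apply: leq_trans B_lt_find _; rewrite -{2}(size_iota 0 (size s).+1) find_size.
have := before_find 0 B_lt_find; rewrite nth_iota // /p add0n.
by move=> /negbFE /s_lt; rewrite ltnn.
Qed.

Lemma mem_moves n d : (d \in moves n) = (0 < d) && (2 * d <= n).
Proof.
rewrite mem_filter mem_iota add1n ltnS.
case: (posnP d) => [-> | d_gt0]; first by rewrite andbF.
rewrite leq_divRL //; apply/idP/idP; lia.
Qed.

Lemma move_rem_small {n d} : d \in moves n -> 3 * (n %% d) < n.
Proof.
rewrite mem_moves => /andP[d_gt0 two_d_le].
have k_ge2 : 2 <= n %/ d by rewrite leq_divRL.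
have := ltn_pmod n d_gt0; have := divn_eq n d; nia.
Qed.

Lemma move_odd_quotient {n d} : d \in moves n -> odd (n %/ d) -> 3 * d <= n.
Proof.
rewrite mem_moves => /andP[d_gt0 two_d_le] odd_k.
have k_ge2 : 2 <= n %/ d by rewrite leq_divRL.
have k_ge3 : 3 <= n %/ d by case: (n %/ d) odd_k k_ge2 => [|[|[]]].
by rewrite -leq_divRL.
Qed.

Lemma option_value_lt_pow2 (sg : nat -> nat) n d j :
    d \in moves n -> n < 3 ^ j.+1 ->
    (forall m, m < 3 ^ j -> sg m < 2 ^ j) ->
  option_value sg n d < 2 ^ j.
Proof.
move=> d_move n_lt sg_lt; rewrite expnS in n_lt.
have copies_lt : nimsum_copies (n %/ d) (sg d) < 2 ^ j.
  rewrite nimsum_copiesE; case: ifP => [odd_k | _]; last by rewrite expn_gt0.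
  by apply: sg_lt; have := move_odd_quotient d_move odd_k; lia.
rewrite /option_value; case: eqP => // _; apply: nimsum_lt_pow2 => //.
by apply: sg_lt; have := move_rem_small d_move; lia.
Qed.

Lemma sg_fuel_lt_pow2 j f n : n < 3 ^ j -> sg_fuel f n < 2 ^ j.
Proof.
elim: j f n => [|j IHj] [|f] n n_lt //=; try by rewrite expn_gt0.
  by move: n_lt; rewrite expn0 ltnS leqn0 => /eqP ->.
apply: (@leq_ltn_trans (2 ^ j)); last by rewrite ltn_exp2l.
apply: mex_le => _ /mapP[d d_move ->]; exact: option_value_lt_pow2 (IHj f).
Qed.

Lemma pow2_bernoulli j : 2 ^ j * (j + 2) <= 2 * 3 ^ j.
Proof. by elim: j => // j IHj; rewrite !expnS; nia. Qed.

Lemma SG_mul_le K n : 3 ^ (4 * K) <= n -> SG n * K <= n.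
Proof.
move=> n_ge.
have n_gt0 : 0 < n by apply: leq_trans n_ge; rewrite expn_gt0.
have /andP[pow_le n_lt] := trunc_log_bounds (isT : 1 < 3) n_gt0.
have j_ge := trunc_log_max (isT : 1 < 3) n_ge.
have := sg_fuel_lt_pow2 _ n n n_lt; rewrite -/(SG n).
have := pow2_bernoulli (trunc_log 3 n); rewrite expnS; nia.
Qed.

Import Order.TTheory GRing.Theory Num.Theory.
Local Open Scope classical_set_scope.
Local Open Scope ring_scope.

Theorem mainTheorem10 (R : realType) :
  (fun n : nat => (SG n)%:R / (n%:R : R)) @ \oo --> 0.
Proof.
apply/cvgrPdist_lt => eps eps_gt0.
set K := (Num.truncn eps^-1).+1.
have invK_lt : eps^-1 < K%:R by rewrite -truncn_lt_nat ?invr_ge0 ?ltW.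
exists (3 ^ (4 * K)).+1 => // n /= n_gt.
have n_gt0 : (0 < n)%N by apply: leq_trans n_gt.
have SG_le : ((SG n)%:R * K%:R <= n%:R :> R) by rewrite -natrM ler_nat SG_mul_le // ltnW.
rewrite sub0r normrN ger0_norm ?divr_ge0 // ltr_pdivrMr ?ltr0n //.
have K_gt0 : 0 < K%:R :> R by rewrite ltr0n.
rewrite -(ltr_pM2r K_gt0); apply: le_lt_trans SG_le _.
by rewrite mulrAC ltr_pMl ?ltr0n // -ltr_pdivrMl // mulr1.
Qed.
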